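(* Let $\mathcal N$ be a ReLU net with input dimension $d$, a single hidden layer of width $n$ and output dimension $1$, i.e. $f_{\mathcal N}(x)=\mathrm{ReLU}\big(b+\sum_{j=1}^n c_j\,\mathrm{ReLU}(A_j(x))\big)$ with $A_j:\mathbb{R}^d\to\mathbb{R}$ affine and $b,c_j\in\mathbb{R}$. Then there exists another ReLU net $\widetilde{\mathcal N}$ with input dimension $d$, output dimension $1$ and $n+2$ hidden layers, each of width $d+2$, that computes the same function as $\mathcal N$ on $[0,1]^d$.
   Context: For $m\geq1$, $\mathrm{ReLU}(x_1,\dots,x_m)=(\max\{0,x_1\},\dots,\max\{0,x_m\})$. A feed-forward ReLU net with input dimension $d_{\mathrm{in}}$, hidden layer width $w$, depth $n$ and output dimension $d_{\mathrm{out}}$ is a function of the form $\mathrm{ReLU}\circ A_n\circ\mathrm{ReLU}\circ A_{n-1}\circ\cdots\circ\mathrm{ReLU}\circ A_1$ with $A_1:\mathbb{R}^{d_{\mathrm{in}}}\to\mathbb{R}^w$, $A_j:\mathbb{R}^w\to\mathbb{R}^w$ ($2\leq j\leq n-1$), $A_n:\mathbb{R}^w\to\mathbb{R}^{d_{\mathrm{out}}}$ affine. Throughout, functions computed by nets are considered on the domain $[0,1]^d$. *)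

From mathcomp Require Import all_boot all_order all_algebra.
From mathcomp Require Import reals.
Set Implicit Arguments. Unset Strict Implicit. Unset Printing Implicit Defensive.
Import Order.TTheory GRing.Theory Num.Theory.
Local Open Scope ring_scope.

Section ReLUNets.
Variable R : realType.

Definition reluv (m : nat) (v : 'cV[R]_m) : 'cV[R]_m :=
  \col_i Num.max 0 (v i 0).

Fixpoint hidden_layers (w : nat) (Ls : seq ('M[R]_w * 'cV[R]_w))
    (h : 'cV[R]_w) : 'cV[R]_w :=
  match Ls with
  | [::] => h
  | (W, b) :: Ls' => hidden_layers Ls' (reluv (W *m h + b))
  end.

(* It has (size Ls).+1 hidden layers, each of width w, and depth (size Ls).+2. *)
Definition relu_net (din w dout : nat)
    (Win : 'M[R]_(w, din)) (bin : 'cV[R]_w)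
    (Ls : seq ('M[R]_w * 'cV[R]_w))
    (Wout : 'M[R]_(dout, w)) (bout : 'cV[R]_dout)
    (x : 'cV[R]_din) : 'cV[R]_dout :=
  reluv (Wout *m hidden_layers Ls (reluv (Win *m x + bin)) + bout).

Definition in_unit_cube (d : nat) (x : 'cV[R]_d) : Prop :=
  forall i : 'I_d, 0 <= x i 0 <= 1.

End ReLUNets.

From mathcomp Require Import all_boot all_order all_algebra.
From mathcomp Require Import reals.
Import Order.TTheory GRing.Theory Num.Theory.
Local Open Scope ring_scope.
Set Implicit Arguments. Unset Strict Implicit. Unset Printing Implicit Defensive.

(* The deep net carries the state (t, s, x) in width d + 2: x is copied
   unchanged from layer to layer (ReLU is the identity on the cube), s is the
   j-th neuron ReLU(A_j x) of the shallow net, and t accumulates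
   M + c_0 s_0 + ... + c_(j-1) s_(j-1).  The offset M is a bound for
   \sum_j |c_j| sup_cube |A_j|, so t never becomes negative and the ReLU
   applied to it is harmless; the output layer finally subtracts M again. *)

Lemma reluv_col_mx (R : realType) (m1 m2 : nat) (u : 'cV[R]_m1) (v : 'cV[R]_m2) :
  reluv (col_mx u v) = col_mx (reluv u) (reluv v).
Proof. by apply/matrixP => i j; rewrite !mxE; case: splitP => k _; rewrite !mxE. Qed.

Lemma reluv_scalar_mx (R : realType) (t : R) :
  reluv (t%:M : 'cV[R]_1) = (Num.max 0 t)%:M.
Proof. by apply/matrixP => i j; rewrite !ord1 !mxE /= !mulr1n. Qed.

Lemma reluv_id (R : realType) (m : nat) (v : 'cV[R]_m) :
  (forall i, 0 <= v i 0) -> reluv v = v.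
Proof. by move=> v_ge0; apply/matrixP => i j; rewrite ord1 mxE max_r. Qed.

Lemma in_unit_cube_ge0 (R : realType) (d : nat) (x : 'cV[R]_d) :
  in_unit_cube x -> forall i, 0 <= x i 0.
Proof. by move=> x01 i; case/andP: (x01 i). Qed.

Lemma relu_net_shallow (R : realType) (din n : nat)
    (Win : 'M[R]_(n, din)) (bin : 'cV[R]_n) (Wout : 'M[R]_(1, n))
    (bout : 'cV[R]_1) (x : 'cV[R]_din) :
  relu_net Win bin [::] Wout bout x =
  (Num.max 0 (bout 0 0 +
     \sum_(k < n) Wout 0 k * Num.max 0 ((Win *m x) k 0 + bin k 0)))%:M.
Proof.
apply/matrixP => i j; rewrite !ord1 !mxE /= mulr1n addrC; congr (Num.max 0 (_ + _)).
by apply: eq_bigr => k _; rewrite !mxE.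
Qed.

Definition ord_pad (T : Type) (n : nat) (f : 'I_n -> T) (x0 : T) (j : nat) : T :=
  if insub j is Some k then f k else x0.

Lemma ord_pad_ord (T : Type) (n : nat) (f : 'I_n -> T) (x0 : T) (k : 'I_n) :
  ord_pad f x0 k = f k.
Proof. by rewrite /ord_pad valK. Qed.

Lemma ord_pad_out (T : Type) (n : nat) (f : 'I_n -> T) (x0 : T) (j : nat) :
  (n <= j)%N -> ord_pad f x0 j = x0.
Proof. by move=> le_nj; rewrite /ord_pad insubN // -leqNgt. Qed.

Section NeuronSumAsDeepNarrowNet.

Variables (R : realType) (d : nat) (a : nat -> 'rV[R]_d) (b c : nat -> R).

Definition neuron (j : nat) (x : 'cV[R]_d) : R :=
  Num.max 0 ((a j *m x) 0 0 + b j).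

Definition neuron_bound (j : nat) : R := `|b j| + \sum_(i < d) `|a j 0 i|.

Lemma neuron_ge0 j x : 0 <= neuron j x.
Proof. by rewrite le_max lexx. Qed.

Lemma neuron_le_bound j x : in_unit_cube x -> neuron j x <= neuron_bound j.
Proof.
move=> x01; rewrite ge_max addr_ge0 ?sumr_ge0 //=.
rewrite (le_trans (ler_norm _)) // (le_trans (ler_normD _ _)) // addrC lerD2l mxE.
rewrite (le_trans (ler_norm_sum _ _ _)) // ler_sum // => i _.
case/andP: (x01 i) => x_ge0 x_le1.
by rewrite normrM (ger0_norm x_ge0) ler_piMr.
Qed.

Definition offset (m : nat) : R := \sum_(0 <= j < m) `|c j| * neuron_bound j.

Definition running_sum (m k : nat) (x : 'cV[R]_d) : R :=
  offset m + \sum_(0 <= j < k) c j * neuron j x.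

Lemma running_sum_ge0 m k x :
  in_unit_cube x -> (k <= m)%N -> 0 <= running_sum m k x.
Proof.
move=> x01 le_km; rewrite /running_sum /offset (big_cat_nat (leq0n k) le_km) /=.
rewrite addrAC -big_split /= addr_ge0 ?sumr_ge0 // => j _.
  rewrite -lerBlDr sub0r (le_trans (ler_norm _)) // normrN normrM.
  by rewrite (ger0_norm (neuron_ge0 _ _)) ler_wpM2l ?neuron_le_bound.
by rewrite mulr_ge0 ?addr_ge0 ?sumr_ge0.
Qed.

Definition state (t s : R) (x : 'cV[R]_d) : 'cV[R]_(1 + (1 + d)) :=
  col_mx t%:M (col_mx s%:M x).

Definition layer (k : nat) : 'M[R]_(1 + (1 + d)) * 'cV[R]_(1 + (1 + d)) :=
  (block_mx 1%:M (row_mx (c k)%:M 0) 0 (block_mx 0 (a k.+1) 0 1%:M),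
   col_mx 0 (col_mx (b k.+1)%:M 0)).

Lemma layerE k t s x : in_unit_cube x ->
  reluv ((layer k).1 *m state t s x + (layer k).2) =
  state (Num.max 0 (t + c k * s)) (neuron k.+1 x) x.
Proof.
move=> x01; rewrite /= mul_block_col !mul_row_col mul_block_col !mul0mx !mul1mx.
rewrite !add0r !addr0 !add_col_mx !addr0 !reluv_col_mx.
rewrite (reluv_id (in_unit_cube_ge0 x01)) -scalar_mxM -raddfD /= reluv_scalar_mx.
rewrite /state; congr (col_mx _ (col_mx _ _)).
by apply/matrixP => i j; rewrite !ord1 !mxE /= mulr1n /neuron mxE.
Qed.

Lemma hidden_layers_iota m k l x : in_unit_cube x -> (k + l <= m)%N ->
  hidden_layers [seq layer j | j <- iota k l]
    (state (running_sum m k x) (neuron k x) x) =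
  state (running_sum m (k + l) x) (neuron (k + l) x) x.
Proof.
move=> x01; elim: l k => [|l IHl] k le_klm; first by rewrite addn0.
have running_sumS : running_sum m k x + c k * neuron k x = running_sum m k.+1 x.
  by rewrite /running_sum big_nat_recr //= addrA.
rewrite /= layerE // running_sumS max_r ?running_sum_ge0 //; last first.
  by rewrite (leq_trans _ le_klm) // -addn1 leq_add2l.
by rewrite -(addSnnS k l) in le_klm *; apply: IHl.
Qed.

Definition input_layer (m : nat) : 'M[R]_(1 + (1 + d), d) * 'cV[R]_(1 + (1 + d)) :=
  (col_mx 0 (col_mx (a 0) 1%:M), col_mx (offset m)%:M (col_mx (b 0)%:M 0)).

Lemma input_layerE m x : in_unit_cube x ->
  reluv ((input_layer m).1 *m x + (input_layer m).2) =
  state (running_sum m 0 x) (neuron 0 x) x.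
Proof.
move=> x01; rewrite /= !mul_col_mx mul0mx mul1mx !add_col_mx add0r addr0.
have := running_sum_ge0 x01 (leq0n m); rewrite /running_sum big_geq // addr0.
move=> offset_ge0; rewrite !reluv_col_mx (reluv_id (in_unit_cube_ge0 x01)).
rewrite reluv_scalar_mx max_r //; congr (col_mx _ (col_mx _ _)).
by apply/matrixP => i j; rewrite !ord1 !mxE /= mulr1n /neuron mxE.
Qed.

Definition output_layer (m : nat) (bout : R) : 'M[R]_(1, 1 + (1 + d)) * 'cV[R]_1 :=
  (row_mx 1%:M 0, (bout - offset m)%:M).

Lemma output_layerE m bout t s x :
  reluv ((output_layer m bout).1 *m state t s x + (output_layer m bout).2) =
  (Num.max 0 (bout + (t - offset m)))%:M.
Proof.
by rewrite /= mul_row_col mul1mx mul0mx addr0 -raddfD reluv_scalar_mx addrCA.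
Qed.

Lemma neuron_sum_deep_narrow_net (m : nat) (bout : R) :
  exists (Win' : 'M[R]_(d.+2, d)) (bin' : 'cV[R]_(d.+2))
         (Ls : seq ('M[R]_(d.+2) * 'cV[R]_(d.+2)))
         (Wout' : 'M[R]_(1, d.+2)) (bout' : 'cV[R]_1),
    size Ls = m /\
    forall x : 'cV[R]_d, in_unit_cube x ->
      relu_net Win' bin' Ls Wout' bout' x =
      (Num.max 0 (bout + \sum_(0 <= j < m) c j * neuron j x))%:M.
Proof.
exists (input_layer m).1, (input_layer m).2, [seq layer j | j <- iota 0 m].
exists (output_layer m bout).1, (output_layer m bout).2.
split=> [|x x01]; first by rewrite size_map size_iota.
rewrite /relu_net input_layerE // hidden_layers_iota // output_layerE.
by rewrite /running_sum addrAC subrr add0r.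
Qed.

End NeuronSumAsDeepNarrowNet.

Theorem lemma3 (R : realType) (d n : nat)
    (Win : 'M[R]_(n, d)) (bin : 'cV[R]_n)
    (Wout : 'M[R]_(1, n)) (bout : 'cV[R]_1) :
  exists (Win' : 'M[R]_(d.+2, d)) (bin' : 'cV[R]_(d.+2))
         (Ls : seq ('M[R]_(d.+2) * 'cV[R]_(d.+2)))
         (Wout' : 'M[R]_(1, d.+2)) (bout' : 'cV[R]_1),
    size Ls = n.+1 /\
    forall x : 'cV[R]_d, in_unit_cube x ->
      relu_net Win' bin' Ls Wout' bout' x = relu_net Win bin [::] Wout bout x.
Proof.
pose a := ord_pad (fun k => row k Win) 0; pose b := ord_pad (fun k => bin k 0) 0.
pose c := ord_pad (Wout 0) 0.
(* One layer more than neurons is required, so neuron n is a dummy with c n = 0. *)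
have [Win' [bin' [Ls [Wout' [bout' [size_Ls net_eq]]]]]] :=
  neuron_sum_deep_narrow_net a b c n.+1 (bout 0 0).
exists Win', bin', Ls, Wout', bout'; split=> // x x01.
rewrite net_eq // relu_net_shallow big_mkord big_ord_recr /= {2}/c ord_pad_out //.
rewrite mul0r addr0; congr ((Num.max 0 (_ + _))%:M); apply: eq_bigr => k _.
by rewrite /c /neuron /a /b !ord_pad_ord -row_mul mxE.
Qed.
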